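(* Let $q$ be a prime power, $m\ge1$, $1\le k\le n$, $g_1,\dots,g_n\in\mathbb{F}_{q^m}$ linearly independent over $\mathbb{F}_q$, $\mathbf g=(g_1,\dots,g_n)$, $C$ the Gabidulin code defined below, $\mathbf r\in\mathbb{F}_{q^m}^n$, and $t:=\min\{d_R(\mathbf c,\mathbf r):\mathbf c\in C\}$. Let $B=\{b^{(1)},b^{(2)}\}$ be a minimal basis of the interpolation module $\mathfrak M(\mathbf r)$ with respect to the $(0,k-1)$-weighted term-over-position order with $\mathrm{lpos}(b^{(i)})=i$ ($i=1,2$), write $b^{(i)}=[b^{(i)}_1\ \ b^{(i)}_2]$, and let $\ell_i$ be the $(0,k-1)$-weighted $q$-degree of $b^{(i)}$. Then $\ell_2\le t+k-1$, or equivalently $\mathrm{qdeg}(b^{(2)}_2)\le t$. Furthermore, $\ell_1=\mathrm{qdeg}(b^{(1)}_1)\ge n-t$.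
   Context: Write $[i]:=q^i$. A $q$-linearized polynomial is $f(x)=\sum_{i=0}^{d}a_ix^{[i]}$, $a_i\in\mathbb{F}_{q^m}$; if $a_d\ne0$, $d=\mathrm{qdeg}(f)$ ($\mathrm{qdeg}(0)=-\infty$). $\mathcal{L}_q(x,q^m)$ is the ring of these under addition and composition $\circ$. $\Pi_{\mathbf g}(x)=\prod_{u\in\langle g_1,\dots,g_n\rangle}(x-u)$ ($\mathbb{F}_q$-span), of $q$-degree $n$. $\Lambda_{\mathbf g,\mathbf r}(x)=\sum_{i=1}^n(-1)^{n-i}r_i\det(\mathfrak D_i(\mathbf g,x))/\det(M_n(g_1,\dots,g_n))$ ($M_n(v_1,\dots,v_s)$ the $n\times s$ matrix with $(j,l)$ entry $v_l^{[j-1]}$; $\mathfrak D_i(\mathbf g,x)$ is $M_n(g_1,\dots,g_n,x)$ without column $i$), with $\Lambda_{\mathbf g,\mathbf r}(g_i)=r_i$. $C=\{(m(g_1),\dots,m(g_n)):m\in\mathcal{L}_q(x,q^m),\ \mathrm{qdeg}(m)<k\}$. $d_R(\mathbf a,\mathbf b)$ is the $\mathbb{F}_q$-rank of the $m\times n$ $\mathbb{F}_q$-matrix obtained by expanding the coordinates of $\mathbf a-\mathbf b$ in a fixed $\mathbb{F}_q$-basis of $\mathbb{F}_{q^m}$. $\mathfrak M(\mathbf r)$ is the set of all $\beta\circ[\Pi_{\mathbf g}\ \ 0]+\gamma\circ[-\Lambda_{\mathbf g,\mathbf r}\ \ x]$, $\beta,\gamma\in\mathcal{L}_q(x,q^m)$,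 with $h\circ[f_1\ f_2]=[h\circ f_1\ \ h\circ f_2]$. Monomials: $x^{[i]}e_j$, $j\in\{1,2\}$. $(0,k-1)$-weighted term-over-position order: $w_1=0,w_2=k-1$, $x^{[i_1]}e_{j_1}<x^{[i_2]}e_{j_2}$ iff $i_1+w_{j_1}<i_2+w_{j_2}$ or (equality and $j_1<j_2$). $\mathrm{lm},\mathrm{lt},\mathrm{lpos}$: greatest monomial, its term, its coordinate. Weighted $q$-degree of $[f_1\ f_2]$: $\max\{\mathrm{qdeg} f_1,\mathrm{qdeg} f_2+k-1\}$. Basis: generating set with $\sum a_i\circ f^{(i)}=0\Rightarrow a_i=0$. $f$ reduces modulo a set $F$ of nonzero elements in one step if $h=f-\sum_i(b_ix^{[a_i]})\circ f^{(i)}$, $f^{(i)}\in F$, $b_i\in\mathbb{F}_{q^m}$, $a_i\ge0$, with $\mathrm{lm}(f)=x^{[a_i]}\circ\mathrm{lm}(f^{(i)})$ and $\mathrm{lt}(f)=\sum_i(b_ix^{[a_i]})\circ\mathrm{lt}(f^{(i)})$; a basis $B$ is minimal if no $b\in B$ can be reduced modulo $B\setminus\{b\}$. *)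

From HB Require Import structures.
From mathcomp Require Import all_boot all_order all_algebra all_field.
Set Implicit Arguments. Unset Strict Implicit. Unset Printing Implicit Defensive.
Import Order.TTheory GRing.Theory.
Local Open Scope ring_scope.

(* Setting: F = F_q (a finite field, q := #|F|), L = F_{q^m} an extension of
   F of degree m := \dim {:L}.  A q-linearized polynomial is an element of
   {poly L} of the form sum_i a_i X^(q^i); composition is comp_poly. *)

Section Gab.
Variables (F : finFieldType) (L : fieldExtType F).

Definition qq : nat := #|F|.

Definition xq (i : nat) : {poly L} := 'X^(qq ^ i).

Definition linearized (f : {poly L}) : Prop :=
  forall i : nat, f`_i != 0 -> exists j : nat, i = (qq ^ j)%N.

(* q-degree of a nonzero linearized polynomial: size f = q^d + 1.
   (The value at f = 0, i.e. -oo, is never used without a guard.) *)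
Definition qdeg (f : {poly L}) : nat := trunc_log qq (size f).-1.

Definition lpair := ({poly L} * {poly L})%type.
Definition p0 : lpair := (0, 0).
Definition padd (u v : lpair) : lpair := (u.1 + v.1, u.2 + v.2).
Definition pcomp (h : {poly L}) (u : lpair) : lpair := (h \Po u.1, h \Po u.2).
Definition psum (s : seq lpair) : lpair := foldr padd p0 s.

Variable k : nat.

Definition wt (j : nat) : nat := if j == 2%N then (k - 1)%N else 0%N.

(* monomials x^[i] e_j are encoded as pairs (i, j), j in {1,2} *)
Definition mlt (mu nu : nat * nat) : bool :=
  (mu.1 + wt mu.2 < nu.1 + wt nu.2)%N ||
  ((mu.1 + wt mu.2 == nu.1 + wt nu.2) && (mu.2 < nu.2)%N).

Definition comp_of (u : lpair) (j : nat) : {poly L} :=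
  if j == 1%N then u.1 else if j == 2%N then u.2 else 0.

Definition coef_at (u : lpair) (mu : nat * nat) : L :=
  (comp_of u mu.2)`_(qq ^ mu.1).

(* the monomials occurring in u (q^i < size forces i < size) *)
Definition monos (u : lpair) : seq (nat * nat) :=
  [seq mu <- [seq (i, 1%N) | i <- iota 0 (size u.1)] ++
             [seq (i, 2%N) | i <- iota 0 (size u.2)]
     | coef_at u mu != 0].

Definition lm (u : lpair) : nat * nat :=
  let ms := monos u in
  foldr (fun mu acc => if mlt acc mu then mu else acc) (head (0%N, 0%N) ms) ms.

Definition lpos (u : lpair) : nat := (lm u).2.

Definition term (c : L) (mu : nat * nat) : lpair :=
  if mu.2 == 1%N then (c *: xq mu.1, 0)
  else if mu.2 == 2%N then (0, c *: xq mu.1) else p0.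

Definition ltm (u : lpair) : lpair := term (coef_at u (lm u)) (lm u).

(* (0,k-1)-weighted q-degree max{qdeg f1, qdeg f2 + k - 1}, qdeg 0 = -oo
   (u assumed nonzero) *)
Definition wdeg (u : lpair) : nat :=
  if u.2 == 0 then qdeg u.1
  else if u.1 == 0 then (qdeg u.2 + (k - 1))%N
  else maxn (qdeg u.1) (qdeg u.2 + (k - 1)).

Definition reducible (Fs : seq lpair) (f : lpair) : Prop :=
  exists s : seq ((lpair * L) * nat),
    (forall x, x \in s ->
       x.1.1 \in Fs /\ lm f = (x.2 + (lm x.1.1).1, (lm x.1.1).2)%N) /\
    ltm f = psum [seq pcomp (x.1.2 *: xq x.2) (ltm x.1.1) | x <- s].

Definition lincomb (a : seq {poly L}) (B : seq lpair) : lpair :=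
  psum [seq pcomp x.1 x.2 | x <- zip a B].

Definition is_basis (M : lpair -> Prop) (B : seq lpair) : Prop :=
  (forall b, b \in B -> M b) /\
  (forall u, M u -> exists a : seq {poly L},
       size a = size B /\ (forall p, p \in a -> linearized p) /\ u = lincomb a B) /\
  (forall a : seq {poly L}, size a = size B -> (forall p, p \in a -> linearized p) ->
       lincomb a B = p0 -> forall p, p \in a -> p = 0).

Definition minimal_basis (M : lpair -> Prop) (B : seq lpair) : Prop :=
  is_basis M B /\ uniq B /\ (forall b, b \in B -> ~ reducible (rem b B) b).

End Gab.

Section Code.
Variables (F : finFieldType) (L : fieldExtType F) (n : nat).

Definition PiG (g : 'I_n -> L) : {poly L} :=
  \prod_(u : finvect_type L | (u : L) \in <<[seq g i | i <- enum 'I_n]>>%VS)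
     ('X - (u : L)%:P).

Definition mooreX (g : 'I_n -> L) : 'M[{poly L}]_(n, n.+1) :=
  \matrix_(j < n, l < n.+1)
     if insub (l : nat) is Some i then ((g i) ^+ (qq F ^ j))%:P else xq L j.

Definition mooreG (g : 'I_n -> L) : 'M[L]_n :=
  \matrix_(j < n, l < n) (g l) ^+ (qq F ^ j).

(* Lambda_{g,r}(x) ; the paper's index i (1-based) is our i+1 *)
Definition LambdaGR (g r : 'I_n -> L) : {poly L} :=
  \sum_(i < n) ((-1) ^+ (n - i.+1) * r i / \det (mooreG g)) *:
     \det (col' (widen_ord (leqnSn n) i) (mooreX g)).

Definition interpMod (g r : 'I_n -> L) (u : lpair L) : Prop :=
  exists beta gamma : {poly L}, linearized beta /\ linearized gamma /\
    u = padd (pcomp beta (PiG g, 0)) (pcomp gamma (- LambdaGR g r, 'X)).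

Definition gabidulin (g : 'I_n -> L) (k : nat) (c : 'I_n -> L) : Prop :=
  exists mp : {poly L}, linearized mp /\ (mp = 0 \/ (qdeg mp < k)%N) /\
    forall i, c i = mp.[g i].

Definition rank_dist (a b : 'I_n -> L) : nat :=
  \rank (\matrix_(i < \dim {:L}, j < n) coord (vbasis fullv) i (a j - b j)).

End Code.

(* Let c = mp(g) be a nearest codeword; the entries of the error c - r span an
   F_q-subspace of L of dimension t.  Its linearized annihilator E has q-degree
   at most t, and dividing E o (-Lambda) on the right by Pi gives an element
   (rho, E) of M(r) whose q-degrees satisfy qdeg rho <= qdeg E + k - 1.  In the
   basis, (rho, E) = a1 o b1 + a2 o b2, and since b1 (resp. b2) has leading
   position 1 (resp. 2) nothing cancels in the second coordinate, whence
   qdeg b2_2 <= qdeg E <= t.  For b1, the polynomial b1_1 + b1_2 o mp maps g_i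
   to b1_2(c_i - r_i); composed with an annihilator of the b1_2-image of the
   error space it vanishes on all q^n elements of <<g>>, so n <= t + qdeg b1_1. *)

From Pilot Require Import Defs.
From HB Require Import structures.
From mathcomp Require Import all_boot all_order all_algebra all_field.
From mathcomp Require Import zify perm.
Set Implicit Arguments. Unset Strict Implicit. Unset Printing Implicit Defensive.
Import Order.TTheory GRing.Theory.
Local Open Scope ring_scope.

Section Linearized.
Variables (F : finFieldType) (L : fieldExtType F).
Local Notation q := (qq F).
Local Notation linearized := (@linearized F L).

Lemma qq_gt1 : (1 < q)%N. Proof. exact: finNzRing_gt1. Qed.

Lemma qq_gt0 : (0 < q)%N. Proof. exact: ltnW qq_gt1. Qed.

Lemma expn_qq_neq0 j : (q ^ j)%N != 0%N.
Proof. by rewrite expn_eq0 negb_and -lt0n qq_gt0. Qed.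

Lemma pnat_qq_exp (R : nzRingType) j :
  [pchar R] =i [pchar F] -> [pchar R].-nat (q ^ j)%N.
Proof.
move=> chR; have [p _ chFp] := finPcharP F.
rewrite /qq (card_pprimeChar chFp) -expnM.
rewrite (eq_pnat _ (pcharf_eq (_ : p \in [pchar R]))); last by rewrite chR.
by rewrite pnatX pnat_id // (pcharf_prime chFp).
Qed.

Lemma expf_qq (c : F) j : c ^+ (q ^ j) = c.
Proof. by elim: j => [|j IH]; rewrite ?expr1 // expnSr exprM IH expf_card. Qed.

Lemma linearized_coef0 p : linearized p -> p`_0 = 0.
Proof.
move=> lp; apply/eqP; apply: contraT => /lp [j] /esym/eqP.
by rewrite (negbTE (expn_qq_neq0 j)).
Qed.

Lemma linearized0 : linearized (0 : {poly L}).
Proof. by move=> i; rewrite coef0 eqxx. Qed.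

Lemma linearizedD p r : linearized p -> linearized r -> linearized (p + r).
Proof.
move=> lp lr i; rewrite coefD; have [pi0|/lp //] := eqVneq p`_i 0.
by rewrite pi0 add0r => /lr.
Qed.

Lemma linearizedZ c p : linearized p -> linearized (c *: p).
Proof.
by move=> lp i; rewrite coefZ => nz; apply: lp; apply: contraNneq nz => ->; rewrite mulr0.
Qed.

Lemma linearizedN p : linearized p -> linearized (- p).
Proof. by move=> lp; rewrite -scaleN1r; apply: linearizedZ. Qed.

Lemma linearizedB p r : linearized p -> linearized r -> linearized (p - r).
Proof. by move=> lp lr; apply: linearizedD => //; apply: linearizedN. Qed.

Lemma linearized_sum I (s : seq I) (P : pred I) (G : I -> {poly L}) :
  (forall i, P i -> linearized (G i)) -> linearized (\sum_(i <- s | P i) G i).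
Proof.
move=> lG; elim/big_rec: _ => [|i x Pi lx]; first exact: linearized0.
by apply: linearizedD => //; apply: lG.
Qed.

Lemma linearized_monomial c i :
  (c != 0 -> exists j, i = (q ^ j)%N) -> linearized (c *: 'X^i).
Proof.
move=> qi m; rewrite coefZ coefXn.
by have [->|_] := eqVneq m i; rewrite ?mulr1 // mulr0 eqxx.
Qed.

Lemma linearized_xq c j : linearized (c *: xq L j).
Proof. by apply: linearized_monomial => _; exists j. Qed.

Lemma linearized_exp p j : linearized p -> linearized (p ^+ (q ^ j)).
Proof.
have chP : [pchar {poly L}] =i [pchar F].
  by move=> x; rewrite (pchar_lalg {poly L}) (pchar_lalg L).
move=> lp; rewrite -[p]coefK poly_def.
rewrite (big_morph (fun x => x ^+ (q ^ j)) (id1 := 0)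
  (fun x y => exprDn_pchar x y (pnat_qq_exp j chP))); last first.
  by rewrite expr0n (negbTE (expn_qq_neq0 j)).
apply: linearized_sum => i _; rewrite exprZn -exprM; apply: linearized_monomial.
have [->|/lp [a ->] _] := eqVneq p`_i 0.
  by rewrite expr0n (negbTE (expn_qq_neq0 j)) eqxx.
by exists (a + j)%N; rewrite expnD.
Qed.

Lemma linearized_comp p r : linearized p -> linearized r -> linearized (p \Po r).
Proof.
move=> lp lr; rewrite comp_polyE; apply: linearized_sum => i _.
have [->|/lp [j ->]] := eqVneq p`_i 0; first by rewrite scale0r; apply: linearized0.
by apply: linearizedZ; apply: linearized_exp.
Qed.

Lemma linearized_hornerD p x y : linearized p -> p.[x + y] = p.[x] + p.[y].
Proof.
have chL : [pchar L] =i [pchar F] by exact: pchar_lalg.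
move=> lp; rewrite !horner_coef -big_split /=; apply: eq_bigr => i _.
have [->|/lp [j ->]] := eqVneq p`_i 0; first by rewrite !mul0r addr0.
by rewrite (exprDn_pchar _ _ (pnat_qq_exp j chL)) mulrDr.
Qed.

Lemma linearized_hornerZ p (c : F) x : linearized p -> p.[c *: x] = c *: p.[x].
Proof.
move=> lp; rewrite !horner_coef scaler_sumr; apply: eq_bigr => i _.
have [->|/lp [j ->]] := eqVneq p`_i 0; first by rewrite !mul0r scaler0.
by rewrite exprZn expf_qq scalerAr.
Qed.

Lemma linearized_horner0 p : linearized p -> p.[0] = 0.
Proof. by move=> lp; rewrite horner_coef0 linearized_coef0. Qed.

Lemma linearized_hornerN p x : linearized p -> p.[- x] = - p.[x].
Proof.
move=> lp; apply/eqP; rewrite -subr_eq0 opprK -linearized_hornerD // addNr.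
by rewrite linearized_horner0.
Qed.

Lemma linearized_hornerB p x y : linearized p -> p.[x - y] = p.[x] - p.[y].
Proof. by move=> lp; rewrite linearized_hornerD // linearized_hornerN. Qed.

Lemma linearized_horner_sum p N (c : 'I_N -> F) (v : 'I_N -> L) : linearized p ->
  p.[\sum_(i < N) c i *: v i] = \sum_(i < N) c i *: p.[v i].
Proof.
move=> lp; apply: (big_rec2 (fun a b => p.[a] = b)); first exact: linearized_horner0.
by move=> i a b _ <-; rewrite linearized_hornerD // linearized_hornerZ.
Qed.

Lemma linearized_horner_span p (s : seq L) x : linearized p -> x \in <<s>>%VS ->
  p.[x] \in <<map (horner p) s>>%VS.
Proof.
move=> lp xs; rewrite (coord_span (X := in_tuple s) xs) linearized_horner_sum //.
by apply: memv_suml => i _; apply/memvZ/memv_span/map_f/mem_nth.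
Qed.

Lemma linearized_vanish_span p (s : seq L) x : linearized p ->
  {in s, forall v, p.[v] = 0} -> x \in <<s>>%VS -> p.[x] = 0.
Proof.
move=> lp s0 xs; rewrite (coord_span (X := in_tuple s) xs) linearized_horner_sum //.
by apply: big1 => i _; rewrite s0 ?scaler0 ?mem_nth.
Qed.

Lemma size_linearized p : linearized p -> p != 0 -> (size p).-1 = (q ^ qdeg p)%N.
Proof.
move=> lp nz; have: p`_(size p).-1 != 0 by rewrite -lead_coefE lead_coef_eq0.
by case/lp => j e; rewrite /qdeg e trunc_expnK // qq_gt1.
Qed.

Lemma predn_size_linearized_gt0 p : linearized p -> p != 0 -> (0 < (size p).-1)%N.
Proof. by move=> lp nz; rewrite size_linearized // expn_gt0 qq_gt0. Qed.

Lemma qdeg_coef_neq0 p i : linearized p -> p`_(q ^ i) != 0 -> (i <= qdeg p)%N.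
Proof.
move=> lp nz; have pnz : p != 0 by apply: contraNneq nz => ->; rewrite coef0.
have : (q ^ i < size p)%N by rewrite ltnNge; apply: contra nz => /leq_sizeP ->.
by rewrite (polySpred pnz) ltnS size_linearized // leq_exp2l // qq_gt1.
Qed.

Lemma lead_qdeg_linearized p : linearized p -> p != 0 ->
  p`_(q ^ qdeg p) != 0 /\ (qdeg p < size p)%N.
Proof.
move=> lp nz; rewrite -size_linearized // -lead_coefE lead_coef_eq0 nz.
by rewrite (polySpred nz) ltnS size_linearized // ltnW // ltn_expl // qq_gt1.
Qed.

Definition linpoly N (a : 'I_N -> L) : {poly L} := \sum_(j < N) a j *: xq L j.

Lemma linearized_linpoly N a : linearized (@linpoly N a).
Proof. by apply: linearized_sum => j _; apply: linearized_xq. Qed.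

Lemma coef_linpoly N a (j : 'I_N) : (@linpoly N a)`_(q ^ j) = a j.
Proof.
rewrite /linpoly coef_sum (bigD1 j) //= coefZ coefXn eqxx mulr1 big1 ?addr0 //.
move=> i ij; rewrite coefZ coefXn eqn_exp2l ?qq_gt1 // eq_sym.
by rewrite (inj_eq val_inj) (negbTE ij) mulr0.
Qed.

Lemma size_linpoly N a : ((size (@linpoly N a)).-1 <= q ^ N.-1)%N.
Proof.
suff : (size (@linpoly N a) <= (q ^ N.-1).+1)%N by case: size.
apply: leq_trans (size_sum _ _ _) _.
apply/bigmax_leqP => j _; apply: leq_trans (size_scale_leq _ _) _.
rewrite /xq size_polyXn ltnS leq_exp2l ?qq_gt1 //.
by case: N j {a} => [[]//|N] j; rewrite -ltnS.
Qed.

Lemma horner_linpoly N a x : (@linpoly N a).[x] = \sum_(j < N) a j * x ^+ (q ^ j).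
Proof. by rewrite horner_sum; apply: eq_bigr => j _; rewrite hornerZ hornerXn. Qed.

Lemma linpoly_neq0 N a (j : 'I_N) : a j != 0 -> @linpoly N a != 0.
Proof. by apply: contraNneq => a0; rewrite -coef_linpoly a0 coef0. Qed.

Lemma vanish_linpoly d (s : seq L) (v : 'rV[L]_d) :
  v *m (\matrix_(j < d, l < size s) s`_l ^+ (q ^ j)) = 0 ->
  {in s, forall x, (linpoly (v 0)).[x] = 0}.
Proof.
move=> vA x xs; have ix : (index x s < size s)%N by rewrite index_mem.
rewrite -(nth_index 0 xs) horner_linpoly.
have := congr1 (fun M : 'M_(1, size s) => M 0 (Ordinal ix)) vA.
rewrite !mxE => e; apply: etrans e; by apply: eq_bigr => j _; rewrite !mxE.
Qed.

Lemma linearized_annihilator (s : seq L) : exists P, [/\ linearized P, P != 0,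
  ((size P).-1 <= q ^ size s)%N & forall x, x \in <<s>>%VS -> P.[x] = 0].
Proof.
pose A := \matrix_(j < (size s).+1, l < size s) s`_l ^+ (q ^ j).
have /rowV0Pn [v /sub_kermxP vA nzv] : kermx A != 0.
  rewrite kermx_eq0 /row_free; apply: contraTneq (rank_leq_col A) => ->.
  by rewrite ltnn.
have /rV0Pn [j nzj] := nzv.
exists (linpoly (v 0)); split; [exact: linearized_linpoly|exact: linpoly_neq0 nzj|
  exact: size_linpoly|].
move=> x; apply: linearized_vanish_span; first exact: linearized_linpoly.
exact: vanish_linpoly vA.
Qed.

(* All q^(size s) elements of <<s>> are roots of P. *)
Lemma linearized_vanish_size (s : seq L) P : free s -> linearized P -> P != 0 ->
  {in s, forall v, P.[v] = 0} -> (q ^ size s <= (size P).-1)%N.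
Proof.
move=> fs lP nzP P0; pose V : {vspace finvect_type L} := <<s>>%VS.
pose rs := enum [pred u : finvect_type L | (u : L) \in V].
have rsP : all (root P) rs.
  apply/allP => u; rewrite /rs (@mem_enum (finvect_type L)) => uV.
  exact/rootP/(linearized_vanish_span lP P0).
have := max_poly_roots nzP rsP (enum_uniq _).
by rewrite /rs -(@cardE (finvect_type L)) card_vspace (eqP fs) (polySpred nzP).
Qed.
End Linearized.

Section Subspace.
Variables (F : finFieldType) (L : fieldExtType F) (n : nat) (g : 'I_n -> L).
Local Notation q := (qq F).
Local Notation linearized := (@linearized F L).
Local Notation gs := [seq g i | i <- enum 'I_n].
Hypothesis free_g : free gs.

Lemma size_gs : size gs = n.
Proof. by rewrite size_map size_enum_ord. Qed.

Lemma gs_in_span i : g i \in <<gs>>%VS.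
Proof. exact/memv_span/map_f/mem_enum. Qed.

Let span_gs := enum [pred u : finvect_type L | (u : L) \in <<gs>>%VS].

Lemma PiG_seq : PiG g = \prod_(z <- span_gs) ('X - (z : L)%:P).
Proof. by rewrite /PiG /span_gs big_enum; apply: eq_bigl => u; rewrite !inE. Qed.

Lemma monic_PiG : PiG g \is monic.
Proof. by rewrite PiG_seq monic_prod_XsubC. Qed.

Lemma PiG_root x : x \in <<gs>>%VS -> (PiG g).[x] = 0.
Proof.
move=> xV; rewrite PiG_seq; apply/rootP; rewrite root_prod_XsubC.
by rewrite (@mem_enum (finvect_type L)).
Qed.

Lemma size_PiG : (size (PiG g)).-1 = (q ^ n)%N.
Proof.
rewrite PiG_seq size_prod_XsubC /span_gs -(@cardE (finvect_type L)).
by rewrite card_vspace (eqP free_g) size_gs.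
Qed.

(* Pi_g divides any linearized annihilator P of <<g>> of the same degree,
   so the quotient is a constant. *)
Lemma linearized_PiG : linearized (PiG g).
Proof.
have [P [lP nzP szP P0]] := linearized_annihilator gs.
have P0s : all (root P) span_gs.
  apply/allP => u; rewrite /span_gs (@mem_enum (finvect_type L)) => uV.
  exact/rootP/P0.
have uniq_gs : uniq_roots span_gs.
  by rewrite uniq_rootsE /span_gs (@enum_uniq (finvect_type L)).
have [Q eQ] := uniq_roots_prod_XsubC P0s uniq_gs; rewrite -PiG_seq in eQ.
have nzPi : PiG g != 0 by exact: monic_neq0 monic_PiG.
have nzQ : Q != 0 by apply: contraNneq nzP => Q0; rewrite eQ Q0 mul0r.
have szP' : (size P).-1 = (size (PiG g)).-1.
  apply/eqP; rewrite eqn_leq size_PiG -{1}size_gs szP.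
  by rewrite -size_gs linearized_vanish_size // => v /memv_span/P0.
have /eqP szQ : size Q == 1%N.
  move: szP'; rewrite eQ size_mul // (polySpred nzQ) (polySpred nzPi) addSn /=.
  by rewrite addnS /= => h; apply/eqP; lia.
rewrite eQ (size1_polyC (eq_leq szQ)) mul_polyC in lP.
have Q0 : Q`_0 != 0.
  by apply: contraNneq nzQ => Q0; rewrite (size1_polyC (eq_leq szQ)) Q0.
by rewrite -[PiG g](scalerK Q0); apply: linearizedZ.
Qed.

(* A left kernel vector of mooreG g is the coefficient vector of a nonzero
   linearized polynomial of q-degree < n vanishing on the n free g_i. *)
Lemma det_mooreG_neq0 : \det (mooreG g) != 0.
Proof.
apply/negP => /det0P [v /rV0Pn [j nzj] vM].
have Pg0 : {in gs, forall x, (linpoly (v 0)).[x] = 0}.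
  move=> x /mapP [l _ ->]; rewrite horner_linpoly.
  have := congr1 (fun M : 'M_(1, n) => M 0 l) vM.
  by rewrite !mxE => e; apply: etrans e; apply: eq_bigr => i _; rewrite !mxE.
have := linearized_vanish_size free_g (linearized_linpoly (a := v 0))
  (linpoly_neq0 nzj) Pg0.
move/leq_trans/(_ (size_linpoly _)); rewrite size_gs leq_exp2l ?qq_gt1 //.
by case: n j {v vM nzj Pg0} => [[]//|m _]; rewrite ltnn.
Qed.
End Subspace.

Lemma det_polyC_mx (R : comNzRingType) m (A : 'M[{poly R}]_m) :
  (forall a b, (size (A a b) <= 1)%N) -> \det A = (\det (map_mx (coefp 0) A))%:P.
Proof.
move=> A1; rewrite -det_map_mx; congr (\det _); apply/matrixP => a b.
by rewrite !mxE /=; apply: size1_polyC.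
Qed.

Section Lagrange.
Variables (F : finFieldType) (L : fieldExtType F) (n' : nat).
Local Notation n := n'.+1.
Variables (g r : 'I_n -> L).
Local Notation linearized := (@linearized F L).
Local Notation W := (widen_ord (leqnSn n)).

(* The points at which the columns of mooreX are evaluated when x := y. *)
Definition moore_points (y : L) (l : 'I_n.+1) : L :=
  if insub (l : nat) is Some i then g i else y.

Lemma lift_widen_max i : lift (W i) ord_max = ord_max.
Proof. by apply: val_inj; rewrite /= /bump -ltnS ltn_ord add1n. Qed.

Lemma lift_widen_lift i (b : 'I_n') :
  val (lift (W i) (lift ord_max b)) = val (lift i b).
Proof. by rewrite /= [bump n' b]/bump leqNgt ltn_ord. Qed.

Lemma moore_points_max y : moore_points y ord_max = y.
Proof. by rewrite /moore_points insubF //= ltnn. Qed.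

Lemma moore_points_widen y l : moore_points y (W l) = g l.
Proof.
by rewrite /moore_points (_ : insub _ = Some l) // -[X in insub X]/(val l) valK.
Qed.

Lemma horner_det_mooreX i y : (\det (col' (W i) (mooreX g))).[y] =
  \det (mooreG (fun c => moore_points y (lift (W i) c))).
Proof.
rewrite -horner_evalE -det_map_mx; congr (\det _); apply/matrixP => a b.
rewrite !mxE /moore_points; case: insub => [c|] /=.
  by rewrite horner_evalE hornerC.
by rewrite horner_evalE hornerXn.
Qed.

Lemma det_moore_points_other i l : l != i ->
  \det (mooreG (fun c => moore_points (g l) (lift (W i) c))) = 0.
Proof.
move=> li; have il : W i != W l.
  by apply: contraNneq li => /(congr1 val) /= /val_inj ->.
have [j ej _] := unlift_some il.
have nj : ord_max != j.
  apply/eqP => jmax; have := congr1 val ej; rewrite -jmax lift_widen_max /=.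
  by have := ltn_ord l; lia.
rewrite -det_tr (determinant_alternate nj) // => c; rewrite !mxE.
by rewrite lift_widen_max moore_points_max -ej moore_points_widen.
Qed.

Lemma det_moore_points_self i :
  \det (mooreG (fun c => moore_points (g i) (lift (W i) c))) =
  (-1) ^+ (odd n' (+) odd i) * \det (mooreG g).
Proof.
pose s : 'S_n := lift_perm ord_max i 1.
have -> : mooreG (fun c => moore_points (g i) (lift (W i) c)) = col_perm s (mooreG g).
  apply/matrixP => a b; rewrite !mxE; congr (_ ^+ _).
  have [->|nb] := eqVneq b ord_max.
    by rewrite lift_widen_max moore_points_max /s lift_perm_id.
  rewrite eq_sym in nb; have [c -> _] := unlift_some nb.
  rewrite /s lift_perm_lift perm1 /moore_points lift_widen_lift valK //.
rewrite col_permE det_mulmx det_perm odd_permV /s odd_lift_perm odd_perm1 addbF.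
by rewrite mulrC.
Qed.

Lemma LambdaGR_interp l :
  free [seq g i | i <- enum 'I_n] -> (LambdaGR g r).[g l] = r l.
Proof.
move=> free_g; have dn := det_mooreG_neq0 free_g.
rewrite /LambdaGR horner_sum (bigD1 l) //= big1 ?addr0; last first.
  move=> i il; rewrite hornerZ horner_det_mooreX.
  by rewrite det_moore_points_other ?mulr0 // eq_sym.
rewrite hornerZ horner_det_mooreX det_moore_points_self subSS.
rewrite -signr_odd oddB -1?ltnS //.
by rewrite mulrCA !mulrA -mulrA mulVf // mulr1 -mulrA signrMK.
Qed.

Lemma linearized_det_mooreX i : linearized (\det (col' (W i) (mooreX g))).
Proof.
rewrite (expand_det_col _ ord_max); apply: linearized_sum => a _.
rewrite mxE lift_widen_max mxE insubF ?ltnn //.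
rewrite /cofactor det_polyC_mx; last first.
  move=> a' b'; rewrite !mxE (_ : insub _ = Some (lift i b')) ?size_polyC_leq1 //.
  by rewrite lift_widen_lift valK.
rewrite -[(-1) ^+ _](rmorph_sign (@polyC L)) -rmorphM mulrC mul_polyC.
exact: linearized_xq.
Qed.

Lemma linearized_LambdaGR : linearized (LambdaGR g r).
Proof.
by apply: linearized_sum => i _; apply: linearizedZ; apply: linearized_det_mooreX.
Qed.
End Lagrange.

Section LeadingMonomial.
Variables (F : finFieldType) (L : fieldExtType F) (k : nat).
Local Notation q := (qq F).
Local Notation linearized := (@linearized F L).

Lemma mlt_irr mu : mlt k mu mu = false.
Proof. by rewrite /mlt ltnn eqxx ltnn. Qed.

Lemma mlt_trans a b c : mlt k a b -> mlt k b c -> mlt k a c.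
Proof.
rewrite /mlt => /orP[h1|/andP[/eqP h1 h2]] /orP[h3|/andP[/eqP h3 h4]]; apply/orP.
- by left; lia.
- by left; lia.
- by left; lia.
- by right; apply/andP; split; [apply/eqP; lia | lia].
Qed.

Lemma foldr_mlt_max x0 s :
  let m := foldr (fun mu acc => if mlt k acc mu then mu else acc) x0 s in
  m \in x0 :: s /\ {in x0 :: s, forall mu, ~~ mlt k m mu}.
Proof.
elim: s => [|a s /= [IH1 IH2]] /=.
  by split; [rewrite inE|move=> mu; rewrite inE => /eqP ->; rewrite mlt_irr].
case: ifP => h; split.
- by rewrite !inE eqxx orbT.
- move=> mu; rewrite !inE => /orP[/eqP->|/orP[/eqP->|ms]]; rewrite ?mlt_irr //.
    by move: (IH2 x0 (mem_head _ _)); apply: contraNN; apply: mlt_trans h.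
  move: (IH2 mu (@mem_behead _ (x0 :: s) mu ms)).
  by apply: contraNN; apply: mlt_trans h.
- by move: IH1; rewrite !inE => /orP[->|->]; rewrite ?orbT.
- move=> mu; rewrite !inE => /orP[/eqP->|/orP[/eqP->|ms]]; rewrite ?h //.
    exact: IH2 (mem_head _ _).
  exact: IH2 (@mem_behead _ (x0 :: s) mu ms).
Qed.

Lemma lm_spec (u : lpair L) : monos u != [::] ->
  lm k u \in monos u /\ {in monos u, forall mu, ~~ mlt k (lm k u) mu}.
Proof.
rewrite /lm; case: (monos u) => [//|a s] _; rewrite [head _ _]/=.
have [inm maxm] := foldr_mlt_max a (a :: s); split.
  by move: inm; rewrite inE => /orP[/eqP->|//]; rewrite mem_head.
by move=> mu ms; apply: maxm; rewrite inE ms orbT.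
Qed.

Lemma monos_coef (u : lpair L) j : (j == 1%N) || (j == 2%N) ->
  linearized (comp_of u j) -> comp_of u j != 0 ->
  (qdeg (comp_of u j), j) \in monos u.
Proof.
move=> /orP[]/eqP-> l1 nz1; have [c1 s1] := lead_qdeg_linearized l1 nz1;
  rewrite /monos mem_filter /coef_at c1 mem_cat.
  by apply/orP; left; apply/mapP; exists (qdeg u.1); rewrite ?mem_iota.
by apply/orP; right; apply/mapP; exists (qdeg u.2); rewrite ?mem_iota.
Qed.

Lemma coef_monos (u : lpair L) mu : mu \in monos u -> coef_at u mu != 0.
Proof. by rewrite /monos mem_filter => /andP[]. Qed.

Lemma lpos_coef (u : lpair L) j : lpos k u = j -> j != 0%N ->
  (comp_of u j)`_(q ^ (lm k u).1) != 0 /\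
  {in monos u, forall mu, ~~ mlt k (lm k u) mu}.
Proof.
move=> pj j0; have nm : monos u != [::].
  by apply: contra j0; rewrite -pj /lpos /lm => /eqP->.
by have [/coef_monos + maxm] := lm_spec nm; rewrite /coef_at -/(lpos k u) pj.
Qed.

Lemma lpos1_qdeg (u : lpair L) : linearized u.1 -> linearized u.2 ->
  lpos k u = 1%N ->
  u.1 != 0 /\ (u.2 != 0 -> (qdeg u.2 + (k - 1) < qdeg u.1)%N).
Proof.
move=> l1 l2 p1; have [c1 maxm] := lpos_coef p1 isT.
move: p1 c1 maxm; rewrite /lpos /comp_of; case: (lm k u) => i _ /= -> c1 maxm.
have nz1 : u.1 != 0 by apply: contraNneq c1 => ->; rewrite coef0.
have := maxm _ (monos_coef (j := 1%N) isT l1 nz1).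
rewrite /mlt /wt /= !addn0 ltnn andbF orbF -leqNgt => le1.
have ei : i = qdeg u.1 by apply/eqP; rewrite eqn_leq le1 qdeg_coef_neq0.
split=> // nz2; have := maxm _ (monos_coef (j := 2%N) isT l2 nz2).
by rewrite /mlt /wt /comp_of /= ei; lia.
Qed.

Lemma lpos2_qdeg (u : lpair L) : linearized u.1 -> linearized u.2 ->
  lpos k u = 2%N ->
  u.2 != 0 /\ (u.1 != 0 -> (qdeg u.1 <= qdeg u.2 + (k - 1))%N).
Proof.
move=> l1 l2 p2; have [c2 maxm] := lpos_coef p2 isT.
move: p2 c2 maxm; rewrite /lpos /comp_of; case: (lm k u) => i _ /= -> c2 maxm.
have nz2 : u.2 != 0 by apply: contraNneq c2 => ->; rewrite coef0.
have := maxm _ (monos_coef (j := 2%N) isT l2 nz2).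
rewrite /mlt /wt /= ltn_add2r ltnn andbF orbF -leqNgt => le2.
have ei : i = qdeg u.2 by apply/eqP; rewrite eqn_leq le2 qdeg_coef_neq0.
split=> // nz1; have := maxm _ (monos_coef (j := 1%N) isT l1 nz1).
by rewrite /mlt /wt /comp_of /= ei; lia.
Qed.

Lemma wdeg_lpos1 (u : lpair L) : linearized u.1 -> linearized u.2 ->
  lpos k u = 1%N -> wdeg k u = qdeg u.1.
Proof.
move=> l1 l2 /(lpos1_qdeg l1 l2) [nz1 lt21]; rewrite /wdeg (negbTE nz1).
by have [//|/lt21/ltnW/maxn_idPl] := eqVneq u.2 0.
Qed.

Lemma wdeg_lpos2 (u : lpair L) : linearized u.1 -> linearized u.2 ->
  lpos k u = 2%N -> wdeg k u = (qdeg u.2 + (k - 1))%N.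
Proof.
move=> l1 l2 /(lpos2_qdeg l1 l2) [nz2 le12]; rewrite /wdeg (negbTE nz2).
by have [//|/le12/maxn_idPr] := eqVneq u.1 0.
Qed.

Lemma lpos1_size (u : lpair L) : linearized u.1 -> linearized u.2 ->
  lpos k u = 1%N -> ((size u.2).-1 * q ^ (k - 1) < (size u.1).-1)%N.
Proof.
move=> l1 l2 /(lpos1_qdeg l1 l2) [nz1 lt21].
have [->|nz2] := eqVneq u.2 0.
  by rewrite size_poly0 mul0n predn_size_linearized_gt0.
by rewrite !size_linearized // -expnD ltn_exp2l ?qq_gt1 ?lt21.
Qed.

Lemma lpos2_size (u : lpair L) : linearized u.1 -> linearized u.2 ->
  lpos k u = 2%N -> ((size u.1).-1 <= (size u.2).-1 * q ^ (k - 1))%N.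
Proof.
move=> l1 l2 /(lpos2_qdeg l1 l2) [nz2 le12].
have [->|nz1] := eqVneq u.1 0; first by rewrite size_poly0.
by rewrite !size_linearized // -expnD leq_exp2l ?qq_gt1 ?le12.
Qed.
End LeadingMonomial.

Section PrednSize.
Variable R : nzRingType.
Implicit Types p r : {poly R}.

Lemma predn_size_add_le p r :
  ((size (p + r)%R).-1 <= maxn (size p).-1 (size r).-1)%N.
Proof. by have := size_polyD p r; rewrite -!subn1; lia. Qed.

Lemma predn_sizeDl p r : ((size r).-1 < (size p).-1)%N ->
  (size (p + r)%R).-1 = (size p).-1.
Proof. by move=> lt_rp; rewrite size_polyDl //; move: lt_rp; rewrite -!subn1; lia. Qed.

(* If [v] is dominated by its first and [w] by its second coordinate (for the
   weight [K] on the second one), and [v + w] is dominated by its second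
   coordinate, then no cancellation happens there. *)
Lemma predn_size_sum_second (K : nat) (v w : {poly R} * {poly R}) :
  (size v.2).-1 = 0%N \/ ((size v.2).-1 * K < (size v.1).-1)%N ->
  ((size w.1).-1 <= (size w.2).-1 * K)%N ->
  ((size (v.1 + w.1)%R).-1 <= (size (v.2 + w.2)%R).-1 * K)%N ->
  (size (v.2 + w.2)%R).-1 = (size w.2).-1.
Proof.
move=> hv hw hu; have [lt_vw|le_wv] := ltnP (size v.2).-1 (size w.2).-1.
  by rewrite addrC predn_sizeDl.
have le2 := predn_size_add_le v.2 w.2; rewrite (maxn_idPl le_wv) in le2.
case: hv => [v0|lt_v].
  by move: le2 le_wv; rewrite v0 !leqn0 => /eqP-> /eqP->.
have lt1 : ((size w.1).-1 < (size v.1).-1)%N.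
  by apply: leq_ltn_trans hw (leq_ltn_trans _ lt_v); rewrite leq_mul2r le_wv orbT.
have le3 : ((size (v.2 + w.2)%R).-1 * K <= (size v.2).-1 * K)%N.
  by rewrite leq_mul2r le2 orbT.
by move: (leq_trans hu le3); rewrite predn_sizeDl // leqNgt lt_v.
Qed.
End PrednSize.

Section CompDivision.
Variables (F : finFieldType) (L : fieldExtType F).
Local Notation q := (qq F).
Local Notation linearized := (@linearized F L).

(* Right division in the composition ring: subtract (lc S x^[qdeg S - N]) o P
   until the q-degree of the remainder drops below N. *)
Lemma linearized_comp_divp (P : {poly L}) (N : nat) :
  linearized P -> P \is monic -> (size P).-1 = (q ^ N)%N ->
  forall S, linearized S -> exists beta rho,
  [/\ linearized beta, linearized rho, S = beta \Po P + rho & (size rho <= q ^ N)%N].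
Proof.
move=> lP mP szP S; have [m] := ubnP (size S); elim: m S => // m IH S szS lS.
have [le|gt] := leqP (size S) (q ^ N).
  by exists 0, S; split => //; [exact: linearized0|rewrite comp_poly0 add0r].
have nzS : S != 0 by rewrite -size_poly_eq0 -lt0n (leq_ltn_trans _ gt).
have szS' := size_linearized lS nzS.
have le_N : (N <= qdeg S)%N.
  by rewrite -(leq_exp2l _ _ (qq_gt1 F)) -szS' -ltnS (ltn_predK gt).
pose T := (lead_coef S *: xq L (qdeg S - N)) \Po P.
have nzc : lead_coef S != 0 by rewrite lead_coef_eq0.
have szP1 : (1 < size P)%N.
  by rewrite (polySpred (monic_neq0 mP)) szP ltnS expn_gt0 (qq_gt0 F).
have szT : size T = size S.
  have : (size T).-1 = (size S).-1.
    rewrite /T size_comp_poly size_scale // /xq size_polyXn /= szP.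
    by rewrite -expnD subnK // szS'.
  by have := predn_size_linearized_gt0 lS nzS; lia.
have lcT : lead_coef T = lead_coef S.
  by rewrite lead_coef_comp // lead_coefZ lead_coefXn (monicP mP) expr1n !mulr1.
have szST : (size (S - T)%R < size S)%N.
  rewrite (polySpred nzS) ltnS; apply/leq_sizeP => j le_j; rewrite coefB.
  have [->|ne_j] := eqVneq j (size S).-1.
    by rewrite -lead_coefE -szT -lead_coefE lcT subrr.
  have le_Sj : (size S <= j)%N by rewrite (polySpred nzS) ltn_neqAle eq_sym ne_j.
  by rewrite !nth_default ?subrr ?szT.
have lT : linearized T by apply: linearized_comp => //; apply: linearized_xq.
have [beta [rho [lb lr eS hr]]] := IH _ (leq_trans szST szS) (linearizedB lS lT).
exists (beta + lead_coef S *: xq L (qdeg S - N)), rho; split => //.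
- by apply: linearizedD => //; apply: linearized_xq.
- by rewrite comp_polyD -/T addrAC -eS subrK.
Qed.
End CompDivision.

Section Decoding.
Variables (F : finFieldType) (L : fieldExtType F) (n' k : nat).
Local Notation n := n'.+1.
Variables (g r c : 'I_n -> L) (mp : {poly L}).
Local Notation q := (qq F).
Local Notation linearized := (@linearized F L).
Local Notation gs := [seq g i | i <- enum 'I_n].
Local Notation K := (q ^ (k - 1))%N.
Hypotheses (free_g : free gs) (lmp : linearized mp)
  (dmp : mp = 0 \/ (qdeg mp < k)%N) (cmp : forall i, c i = mp.[g i]).

Lemma size_mp : ((size mp).-1 <= K)%N.
Proof.
have [->|nz] := eqVneq mp 0; first by rewrite size_poly0.
case: dmp => [/eqP/idPn//|lt_k].
by rewrite size_linearized // leq_exp2l ?qq_gt1 //; lia.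
Qed.

Lemma interpModP u : interpMod g r u ->
  [/\ linearized u.1, linearized u.2 & forall i, u.1.[g i] = - u.2.[r i]].
Proof.
move=> [beta [gamma [lb [lg ->]]]]; rewrite /padd /Defs.pcomp /=.
rewrite comp_poly0r linearized_coef0 // polyC0 add0r comp_polyXr; split => //.
- apply: linearizedD; first exact/linearized_comp/linearized_PiG.
  exact/linearized_comp/linearizedN/linearized_LambdaGR.
- move=> i; rewrite hornerD !horner_comp PiG_root ?gs_in_span //.
  by rewrite linearized_horner0 // add0r hornerN LambdaGR_interp // linearized_hornerN.
Qed.

(* The error vectors c - r span an F-subspace of L of dimension rank_dist c r;
   [errs] is a spanning family read off a rank factorization of the error
   matrix. *)
Local Notation vb := (vbasis (fullv : {vspace L})).
Local Notation errmx :=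
  (\matrix_(i < \dim {:L}, j < n) coord vb i (c j - r j)).
Definition errs : seq L :=
  [seq \sum_(i < \dim {:L}) col_base errmx i s *: vb`_i | s <- enum 'I_(\rank errmx)].

Lemma size_errs : size errs = rank_dist c r.
Proof. by rewrite size_map size_enum_ord. Qed.

Lemma error_in_span j : c j - r j \in <<errs>>%VS.
Proof.
rewrite (coord_vbasis (memvf (c j - r j))).
have e i : coord vb i (c j - r j) = \sum_s col_base errmx i s * row_base errmx s j.
  have := congr1 (fun M : 'M[F]_(\dim {:L}, n) => M i j) (mulmx_base errmx).
  by rewrite !mxE => <-.
under eq_bigr do rewrite e scaler_suml.
rewrite exchange_big /=; apply: memv_suml => s _.
rewrite (eq_bigr (fun i => row_base errmx s j *: (col_base errmx i s *: vb`_i))).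
  by rewrite -scaler_sumr; apply/memvZ/memv_span/map_f/mem_enum.
by move=> i _; rewrite scalerA mulrC.
Qed.

(* Right division of E o (-Lambda) by Pi gives the element (rho, E) of M(r);
   rho + E o mp maps g_i to E(c_i - r_i) = 0. *)
Lemma error_locator_interpMod E : linearized E ->
  (forall x, x \in <<errs>>%VS -> E.[x] = 0) ->
  exists rho, interpMod g r (rho, E) /\ ((size rho).-1 <= (size E).-1 * K)%N.
Proof.
move=> lE E0; set S := E \Po (- LambdaGR g r).
have lS : linearized S by apply/linearized_comp/linearizedN/linearized_LambdaGR.
have [beta [rho [lb lr eS sz_rho]]] :=
  linearized_comp_divp (linearized_PiG free_g) (monic_PiG g) (size_PiG free_g) lS.
exists rho; split.
  exists (- beta), E; split; first exact: linearizedN.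
  split => //.
  rewrite /padd /Defs.pcomp /= comp_poly0r coefN linearized_coef0 // oppr0 add0r.
  by rewrite comp_polyXr -scaleN1r comp_polyZ scaleN1r -/S eS addKr.
pose Z := rho + (E \Po mp).
have lZ : linearized Z by apply: linearizedD => //; apply: linearized_comp.
have Z0 : {in gs, forall v, Z.[v] = 0}.
  move=> v /mapP [i _ ->]; rewrite hornerD horner_comp -cmp.
  have -> : rho = S - (beta \Po PiG g) by rewrite eS addrC addKr.
  rewrite hornerD hornerN !horner_comp PiG_root ?gs_in_span //.
  rewrite linearized_horner0 // subr0 hornerN LambdaGR_interp //.
  by rewrite -linearized_hornerD // addrC E0 ?error_in_span.
have szEmp : ((size (E \Po mp)).-1 <= (size E).-1 * K)%N.
  by rewrite size_comp_poly leq_mul2l size_mp orbT.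
have [Zeq0|nzZ] := eqVneq Z 0.
  have -> : rho = - (E \Po mp) by apply/eqP; rewrite -addr_eq0 -/Z Zeq0.
  by rewrite size_polyN.
(* Z vanishes on <<g>>, so deg Z >= q^n > deg rho: its degree is that of E o mp. *)
have le_Z := linearized_vanish_size free_g lZ nzZ Z0; rewrite size_gs in le_Z.
have := predn_size_add_le rho (E \Po mp); rewrite -/Z leq_max => szZ.
have qn0 : (0 < q ^ n)%N by rewrite expn_gt0 qq_gt0.
(* generalizing makes lia see the differently elaborated sizes as equal atoms *)
move: le_Z szZ sz_rho szEmp qn0.
move: (q ^ n)%N ((size E).-1 * K)%N (size Z) (size rho) (size (E \Po mp)).
by move=> Q M z a b; lia.
Qed.

Variables (b1 b2 : lpair L).
Hypotheses (basisB : is_basis (interpMod g r) [:: b1; b2])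
  (b1_pos : lpos k b1 = 1%N) (b2_pos : lpos k b2 = 2%N).

Lemma interpMod_b1 : interpMod g r b1.
Proof. by case: basisB => /(_ b1 (mem_head _ _)). Qed.

Lemma interpMod_b2 : interpMod g r b2.
Proof. by case: basisB => inB _; apply: inB; rewrite !inE eqxx orbT. Qed.

(* With E the annihilator of the error space, write (rho, E) = a1 o b1 + a2 o b2.
   By the leading positions of b1 and b2 nothing cancels in the second
   coordinate, so qdeg E = qdeg a2 + qdeg b2.2. *)
Lemma qdeg_b2_le : (qdeg b2.2 <= rank_dist c r)%N.
Proof.
have [E [lE nzE szE E0]] := linearized_annihilator errs; rewrite size_errs in szE.
have [rho [Mrho szrho]] := error_locator_interpMod lE E0.
have [l11 l12 _] := interpModP interpMod_b1.
have [l21 l22 _] := interpModP interpMod_b2.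
have [nzb2 _] := lpos2_qdeg l21 l22 b2_pos.
case: basisB => _ [/(_ _ Mrho) [[|a1 [|a2 [|? ?]]] [//= _ [_ eu]]] _].
have /= eE := congr1 snd eu; have /= erho := congr1 fst eu.
rewrite !addr0 in eE erho.
have := @predn_size_sum_second _ K (Defs.pcomp a1 b1) (Defs.pcomp a2 b2).
rewrite /= !size_comp_poly -eE -erho => /(_ _ _ szrho) eqE.
have {}eqE : (size E).-1 = ((size a2).-1 * (size b2.2).-1)%N.
  apply: eqE; last by rewrite -mulnA leq_mul2l lpos2_size ?orbT.
  have [A0|A1] := posnP (size a1).-1; first by left; rewrite A0.
  by right; rewrite -mulnA ltn_pmul2l // lpos1_size.
rewrite -(leq_exp2l _ _ (qq_gt1 F)) -size_linearized // (leq_trans _ szE) // eqE.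
rewrite leq_pmull // lt0n.
by apply: contraTneq (predn_size_linearized_gt0 lE nzE) => A0; rewrite eqE A0.
Qed.

(* b1.1 + b1.2 o mp maps each g_i to b1.2 (c_i - r_i); an annihilator of the
   b1.2-image of the error space composed with it kills all of <<g>>. *)
Lemma qdeg_b1_ge : (n - rank_dist c r <= qdeg b1.1)%N.
Proof.
have [l11 l12 ev1] := interpModP interpMod_b1.
have [nz11 _] := lpos1_qdeg l11 l12 b1_pos.
have [E [lE nzE szE E0]] := linearized_annihilator [seq b1.2.[w] | w <- errs].
rewrite size_map size_errs in szE.
pose h := b1.1 + (b1.2 \Po mp).
have lh : linearized h by apply: linearizedD => //; apply: linearized_comp.
have szh : (size h).-1 = (size b1.1).-1.
  apply: predn_sizeDl; rewrite size_comp_poly.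
  by apply: leq_ltn_trans (lpos1_size l11 l12 b1_pos); rewrite leq_mul2l size_mp orbT.
have lZ : linearized (E \Po h) by apply: linearized_comp.
have szZ : (size (E \Po h)).-1 = ((size E).-1 * q ^ qdeg b1.1)%N.
  by rewrite size_comp_poly szh size_linearized.
have nzZ : E \Po h != 0.
  rewrite comp_poly_eq0 //; move: (predn_size_linearized_gt0 l11 nz11).
  by rewrite -szh; case: (size h) => [|[]].
have Z0 : {in gs, forall v, (E \Po h).[v] = 0}.
  move=> v /mapP [i _ ->]; rewrite horner_comp; apply: E0.
  rewrite hornerD ev1 horner_comp -cmp addrC -linearized_hornerB //.
  exact: linearized_horner_span (error_in_span i).
have := linearized_vanish_size free_g lZ nzZ Z0; rewrite size_gs szZ => le_n.
have : (q ^ n <= q ^ (rank_dist c r + qdeg b1.1))%N.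
  by rewrite expnD (leq_trans le_n) // leq_mul2r szE orbT.
by rewrite leq_exp2l ?qq_gt1 // leq_subLR.
Qed.
End Decoding.

Theorem lemma32 (F : finFieldType) (L : fieldExtType F) (n k : nat)
  (g r : 'I_n -> L) (t : nat) (b1 b2 : lpair L) :
  (1 <= k)%N -> (k <= n)%N ->
  free [seq g i | i <- enum 'I_n] ->
  (exists2 c, gabidulin g k c & rank_dist c r = t) ->
  (forall c, gabidulin g k c -> (t <= rank_dist c r)%N) ->
  minimal_basis k (interpMod g r) [:: b1; b2] ->
  lpos k b1 = 1%N -> lpos k b2 = 2%N ->
  [/\ (wdeg k b2 <= t + (k - 1))%N,
      (qdeg b2.2 <= t)%N,
      wdeg k b1 = qdeg b1.1
    & (n - t <= wdeg k b1)%N].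
Proof.
move=> k_gt0 le_kn + [c [mp [lmp [dmp cmp]]] <-] _ [basisB _] b1_pos b2_pos.
move: g r c cmp basisB le_kn; case: n => [|n'] g r c cmp basisB le_kn free_g.
  by have := leq_trans k_gt0 le_kn.
have [l11 l12 _] := interpModP free_g (interpMod_b1 basisB).
have [l21 l22 _] := interpModP free_g (interpMod_b2 basisB).
have le_b2 := qdeg_b2_le free_g lmp dmp cmp basisB b1_pos b2_pos.
have wdeg_b1 := wdeg_lpos1 l11 l12 b1_pos.
split => //; first by rewrite wdeg_lpos2 // leq_add2r.
by rewrite wdeg_b1 (qdeg_b1_ge free_g lmp dmp cmp basisB b1_pos).
Qed.
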